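(* Let $S\subseteq\mathbb{S}$ be nonempty. The Cournot game on $S$ has a unique pure Nash equilibrium, given for each $i\in S$ by $$\hat q_i=\frac{W(e^{\theta_i-1})}{1+\sum_{j\in S}W(e^{\theta_j-1})},\qquad \hat p_i=1+W(e^{\theta_i-1}).$$ Consequently, writing $w_i=W(e^{\theta_i-1})$, the equilibrium social welfare and revenue are $$\widehat{sw}(S)=\log\Big(1+\sum_{i\in S}w_i\Big)+\frac{\sum_{i\in S}(w_i^2+w_i)}{1+\sum_{i\in S}w_i},\qquad \widehat{re}(S)=\frac{\sum_{i\in S}(w_i^2+w_i)}{1+\sum_{i\in S}w_i}.$$
   Context: Sellers $\mathbb{S}=\{1,\dots,n\}$ with product qualities $\theta_i\ge0$. Cournot game on a displayed set $S$: seller $i\in S$ chooses a demand (quantity) $q_i$; the joint profile must lie in $\mathcal Q=\{\boldsymbol q:\ 0\le\sum_{i\in\bar S}q_i\le \frac{\sum_{i\in\bar S}e^{\theta_i}}{1+\sum_{i\in\bar S}e^{\theta_i}}\ \forall\bar S\subseteq S\}$; the resulting price is $p_i(\boldsymbol q)=\theta_i+\log(1-\sum_{j\in S}q_j)-\log q_i$ (the inverse of the MNL demand $q_i=e^{\theta_i-p_i}/(1+\sum_{j\in S}e^{\theta_j-p_j})$), and seller $i$'s payoff is $r_i(\boldsymbol q)=p_i(\boldsymbol q)q_i$. Social welfare is $\log(1+\sum_{j\in S}e^{\theta_j-p_j})+\sum_{i\in S}p_iq_i$ and revenue is $\sum_{i\in S}p_iq_i$. $W$ is the Lambert W function on $[0,\infty)$: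 $W(x)e^{W(x)}=x$. *)

From Stdlib Require Import Reals List Arith ClassicalEpsilon.
Import ListNotations.
Open Scope R_scope.

Definition LambertW (x : R) : R :=
  epsilon (inhabits 0) (fun w => 0 <= w /\ w * exp w = x).

Definition sumS (S : list nat) (f : nat -> R) : R :=
  fold_right (fun i acc => f i + acc) 0 S.

Definition feasible (theta : nat -> R) (S : list nat) (q : nat -> R) : Prop :=
  forall Sb : list nat, incl Sb S -> NoDup Sb ->
    0 <= sumS Sb q /\
    sumS Sb q <= sumS Sb (fun i => exp (theta i)) / (1 + sumS Sb (fun i => exp (theta i))).

(* inverse MNL price *)
Definition price (theta : nat -> R) (S : list nat) (q : nat -> R) (i : nat) : R :=
  theta i + ln (1 - sumS S q) - ln (q i).

Definition payoff (theta : nat -> R) (S : list nat) (q : nat -> R) (i : nat) : R :=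
  price theta S q i * q i.

Definition update (q : nat -> R) (i : nat) (x : R) : nat -> R :=
  fun j => if Nat.eq_dec j i then x else q j.

Definition is_NE (theta : nat -> R) (S : list nat) (q : nat -> R) : Prop :=
  feasible theta S q /\
  forall i, In i S -> forall x : R,
    feasible theta S (update q i x) ->
    payoff theta S (update q i x) i <= payoff theta S q i.

Definition revenue (theta : nat -> R) (S : list nat) (q : nat -> R) : R :=
  sumS S (fun i => price theta S q i * q i).

Definition welfare (theta : nat -> R) (S : list nat) (q : nat -> R) : R :=
  ln (1 + sumS S (fun j => exp (theta j - price theta S q j))) + revenue theta S q.

(* Write w_i = W(e^(theta_i - 1)), so that ln w_i + w_i = theta_i - 1.  If the
   other sellers sell a total Q_{-i}, seller i faces the residual capacity
   c = 1 - Q_{-i} and the one-dimensional payoff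
       f_c(x) = (theta_i + ln (c - x) - ln x) * x       on [0, c).
   Putting y = w_i (c - x) / x, one gets f_c(x) = x (1 + w_i + ln y)
   <= x (w_i + y) = c w_i, with equality iff y = 1, i.e. x = c w_i/(1 + w_i):
   every seller has a unique best response, characterised by
   x / (c - x) = w_i.  The equilibrium profile qhat_i = w_i / (1 + sum_S w)
   satisfies this for all sellers simultaneously and is feasible, hence a
   Nash equilibrium.  Conversely, at any equilibrium q with Q = sum_S q:
   (1) nobody plays above the best response, q_i <= (1 - Q) w_i, because
       lowering a quantity preserves feasibility and would strictly help;
   (2) therefore all subset constraints have slack, so q_i is a local
       maximiser of f_c also to the right; a vanishing derivative (or, when
       q_i = 0, positivity of f_c near 0) forces q_i = (1 - Q) w_i;
   (3) summing over S pins down Q, hence q = qhat.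
   The file develops finite sums, the Lambert W function, the one-seller
   best-response problem, unilateral deviations and feasibility, the
   equilibrium profile, and finally derives the theorem. *)

From Stdlib Require Import Reals List Lra ClassicalEpsilon.
From Coquelicot Require Import Coquelicot.
Import ListNotations.
Open Scope R_scope.

Lemma sumS_ext L f g : (forall j, In j L -> f j = g j) -> sumS L f = sumS L g.
Proof.
  induction L as [|a L IH]; simpl; intros H; [reflexivity|].
  rewrite H, IH by auto. reflexivity.
Qed.

Lemma sumS_le L f g : (forall j, In j L -> f j <= g j) -> sumS L f <= sumS L g.
Proof.
  induction L as [|a L IH]; simpl; intros H; [lra|].
  assert (f a <= g a) by auto. assert (sumS L f <= sumS L g) by auto. lra.
Qed.

Lemma sumS_nonneg L f : (forall j, In j L -> 0 <= f j) -> 0 <= sumS L f.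
Proof.
  induction L as [|a L IH]; simpl; intros H; [lra|].
  assert (0 <= f a) by auto. assert (0 <= sumS L f) by auto. lra.
Qed.

Lemma sumS_scal L c f : sumS L (fun j => c * f j) = c * sumS L f.
Proof. induction L; simpl; [ring|]. rewrite IHL. ring. Qed.

Lemma sumS_minus L f g : sumS L (fun j => f j - g j) = sumS L f - sumS L g.
Proof. induction L; simpl; [ring|]. rewrite IHL. ring. Qed.

Lemma sumS_remove L a f : NoDup L -> In a L ->
  sumS L f = f a + sumS (remove Nat.eq_dec a L) f.
Proof.
  induction L as [|b L IH]; simpl; intros Hnd Hin; [contradiction|].
  inversion Hnd; subst.
  destruct (Nat.eq_dec a b) as [->|Hne].
  - rewrite notin_remove by auto. reflexivity.
  - destruct Hin as [->|Hin]; [congruence|].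
    simpl. rewrite IH by auto. ring.
Qed.

Lemma NoDup_remove_nat L a : NoDup L -> NoDup (remove Nat.eq_dec a L).
Proof.
  induction L as [|b L IH]; simpl; intros H; [constructor|].
  inversion H; subst. destruct (Nat.eq_dec a b); auto.
  constructor; auto. intros Hc. apply in_remove in Hc as [Hc _]. auto.
Qed.

Lemma sumS_sub S Sb f : NoDup Sb -> incl Sb S -> (forall j, In j S -> 0 <= f j) ->
  sumS Sb f <= sumS S f.
Proof.
  revert Sb. induction S as [|a S IH]; intros Sb Hnd Hinc Hf.
  - destruct Sb as [|b Sb]; simpl; [lra|]. exfalso. apply (Hinc b); simpl; auto.
  - simpl. assert (Ha0 : 0 <= f a) by (apply Hf; simpl; auto).
    destruct (in_dec Nat.eq_dec a Sb) as [Ha|Ha].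
    + rewrite (sumS_remove Sb a) by auto.
      enough (sumS (remove Nat.eq_dec a Sb) f <= sumS S f) by lra.
      apply IH.
      * apply NoDup_remove_nat; auto.
      * intros x Hx. apply in_remove in Hx as [Hx Hxa].
        destruct (Hinc x Hx); [congruence|auto].
      * intros; apply Hf; simpl; auto.
    + enough (sumS Sb f <= sumS S f) by lra.
      apply IH; auto.
      * intros x Hx. destruct (Hinc x Hx); [subst; contradiction|auto].
      * intros; apply Hf; simpl; auto.
Qed.

Lemma ln_div x y : 0 < x -> 0 < y -> ln (x / y) = ln x - ln y.
Proof.
  intros. unfold Rdiv. rewrite ln_mult, ln_Rinv; auto. apply Rinv_0_lt_compat; auto.
Qed.

Lemma ln_le_pred y : 0 < y -> ln y <= y - 1.
Proof. intros Hy. pose proof (exp_ineq1_le (ln y)). rewrite exp_ln in H; lra. Qed.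

Lemma ln_eq_pred y : 0 < y -> y - 1 <= ln y -> y = 1.
Proof.
  intros Hy H. destruct (Req_dec (ln y) 0) as [H0|H0].
  - rewrite <- (exp_ln y Hy), H0, exp_0. reflexivity.
  - pose proof (exp_ineq1 _ H0). rewrite exp_ln in H1; lra.
Qed.

Lemma frac_mono a b : 0 <= a -> a <= b -> a / (1 + a) <= b / (1 + b).
Proof.
  intros Ha Hab. apply (Rmult_le_reg_r ((1 + a) * (1 + b))); [nra|].
  replace (a / (1 + a) * ((1 + a) * (1 + b))) with (a * (1 + b)) by (field; lra).
  replace (b / (1 + b) * ((1 + a) * (1 + b))) with (b * (1 + a)) by (field; lra). nra.
Qed.

Lemma div_mono c a b d : 0 <= c -> c <= a -> 0 < b -> b <= d -> c / d <= a / b.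
Proof.
  intros. unfold Rdiv. apply Rmult_le_compat; auto.
  - left. apply Rinv_0_lt_compat. lra.
  - apply Rinv_le_contravar; auto.
Qed.

(** * The Lambert W function on (0, oo) *)

Lemma wexp_strict u v : 0 <= u -> u < v -> u * exp u < v * exp v.
Proof.
  intros Hu Huv. assert (exp u < exp v) by (apply exp_increasing; auto).
  assert (0 < exp u) by apply exp_pos. nra.
Qed.

Lemma LambertW_exists a : 0 < a -> exists w, 0 <= w /\ w * exp w = a.
Proof.
  intros Ha.
  destruct (IVT (fun w => w * exp w - a) 0 a) as [z [Hz1 Hz2]].
  - intros x. apply continuity_pt_minus; [|apply continuity_pt_const; intros ? ?; reflexivity].
    apply continuity_pt_mult; [apply derivable_continuous_pt; apply derivable_pt_id|].
    apply derivable_continuous_pt; apply derivable_pt_exp.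
  - auto.
  - rewrite exp_0. lra.
  - assert (1 < exp a) by (rewrite <- exp_0; apply exp_increasing; auto). nra.
  - exists z. split; lra.
Qed.

Lemma LambertW_spec a : 0 < a -> 0 < LambertW a /\ LambertW a * exp (LambertW a) = a.
Proof.
  intros Ha. unfold LambertW.
  destruct (epsilon_spec (inhabits 0) (fun w => 0 <= w /\ w * exp w = a)
              (LambertW_exists a Ha)) as [[H1|H1] H2]; split; auto.
  rewrite <- H1 in H2. lra.
Qed.

(* Since w |-> w e^w is strictly increasing on [0, oo), W is its inverse. *)
Lemma LambertW_unique a u : 0 < a -> 0 <= u -> u * exp u = a -> u = LambertW a.
Proof.
  intros Ha Hu Hue. destruct (LambertW_spec a Ha) as [Hw Hwe].
  destruct (Rtotal_order u (LambertW a)) as [H|[H|H]]; auto.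
  - pose proof (wexp_strict _ _ Hu H). lra.
  - pose proof (wexp_strict (LambertW a) u ltac:(lra) H). lra.
Qed.

(* The equilibrium markup parameter of a seller of quality th. *)
Definition lw (th : R) : R := LambertW (exp (th - 1)).

Lemma lw_pos th : 0 < lw th.
Proof. apply LambertW_spec, exp_pos. Qed.

Lemma lw_log th : ln (lw th) + lw th = th - 1.
Proof.
  destruct (LambertW_spec (exp (th - 1)) (exp_pos _)) as [Hw Hwe]. fold (lw th) in Hw, Hwe.
  rewrite <- (ln_exp (th - 1)), <- Hwe, ln_mult, ln_exp by (auto; apply exp_pos). ring.
Qed.

Lemma lw_exp th : exp (th - 1 - lw th) = lw th.
Proof.
  replace (th - 1 - lw th) with (ln (lw th)) by (pose proof (lw_log th); lra).
  apply exp_ln, lw_pos.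
Qed.

(* lw th < e^th: this is what gives slack to the feasibility constraints. *)
Lemma lw_lt_exp th : lw th < exp th.
Proof.
  pose proof (lw_pos th) as Hw. rewrite <- (lw_exp th).
  apply exp_increasing. lra.
Qed.

(** * The one-seller best-response problem *)

(* Payoff of a seller of quality th selling x when the residual capacity
   left by the other sellers is cap. *)
Definition br_payoff (th cap x : R) : R := (th + ln (cap - x) - ln x) * x.

Lemma br_payoff_bound th cap x : 0 < cap -> 0 <= x < cap ->
  br_payoff th cap x <= cap * lw th /\
  (cap * lw th <= br_payoff th cap x -> x = cap * lw th / (1 + lw th)).
Proof.
  intros Hcap [[Hx|Hx] HxR]; unfold br_payoff;
    pose proof (lw_pos th) as Hw; pose proof (lw_log th) as Hth.
  - set (y := lw th * (cap - x) / x).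
    assert (Hy : 0 < y) by (unfold y; apply Rdiv_lt_0_compat; nra).
    assert (Hly : ln y = ln (lw th) + ln (cap - x) - ln x).
    { unfold y. rewrite ln_div, ln_mult by (auto; nra). ring. }
    assert (Hxy : y * x = lw th * (cap - x)) by (unfold y; field; lra).
    pose proof (ln_le_pred y Hy).
    replace (th + ln (cap - x) - ln x) with (1 + lw th + ln y) by lra.
    split; [nra|].
    intros Hge. assert (Hy1 : y = 1).
    { apply ln_eq_pred; auto. apply (Rmult_le_reg_r x); [auto|]. nra. }
    rewrite Hy1 in Hxy. field_simplify_eq; lra.
  - subst x. split; [nra|]. intros. nra.
Qed.

Lemma br_payoff_opt th cap : 0 < cap ->
  br_payoff th cap (cap * lw th / (1 + lw th)) = cap * lw th.
Proof.
  intros Hcap. unfold br_payoff. pose proof (lw_pos th) as Hw.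
  set (x := cap * lw th / (1 + lw th)).
  assert (Hx : 0 < x) by (unfold x; apply Rdiv_lt_0_compat; nra).
  assert (Hcx : cap - x = x / lw th) by (unfold x; field; lra).
  rewrite Hcx, ln_div by lra.
  replace (th + (ln x - ln (lw th)) - ln x) with (1 + lw th) by (pose proof (lw_log th); lra).
  unfold x; field; lra.
Qed.

Lemma br_payoff_deriv th cap c : 0 < c < cap ->
  derivable_pt_lim (br_payoff th cap) c (th + ln (cap - c) - ln c - c / (cap - c) - 1).
Proof.
  intros. apply is_derive_Reals. unfold br_payoff. auto_derive.
  - repeat split; lra.
  - unfold Rminus; field; lra.
Qed.

Lemma br_payoff_pos th cap x : 0 < x -> x * (1 + exp th) < exp th * cap ->
  0 < br_payoff th cap x.
Proof.
  intros Hx Hsmall. unfold br_payoff. pose proof (exp_pos th) as He.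
  assert (Hcx : 0 < cap - x) by nra.
  enough (ln x < th + ln (cap - x)) by nra.
  rewrite <- (ln_exp th), <- ln_mult by auto.
  apply ln_increasing; nra.
Qed.

Lemma br_local_max th cap c d : 0 < cap -> 0 <= c < cap -> 0 < d ->
  (forall x, 0 <= x <= c + d -> br_payoff th cap x <= br_payoff th cap c) ->
  c = (cap - c) * lw th.
Proof.
  intros Hcap [[Hc|Hc] HcR] Hd Hmax.
  - set (l := th + ln (cap - c) - ln c - c / (cap - c) - 1).
    pose proof (br_payoff_deriv th cap c (conj Hc HcR)) as Hder. fold l in Hder.
    assert (Hl : l = 0).
    { change l with (derive_pt (br_payoff th cap) c (exist _ l Hder)).
      apply (deriv_maximum _ (c / 2) (c + d)); [lra|lra|].
      intros x Hx1 Hx2. apply Hmax. lra. }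
    set (u := c / (cap - c)).
    assert (Hu : 0 < u) by (unfold u; apply Rdiv_lt_0_compat; lra).
    assert (Hue : u * exp u = exp (th - 1)).
    { rewrite <- (exp_ln u Hu) at 1. rewrite <- exp_plus. f_equal.
      unfold u. rewrite ln_div by lra. unfold l in Hl. lra. }
    assert (Hlw : u = lw th) by (apply LambertW_unique; auto; [apply exp_pos|lra]).
    rewrite <- Hlw. unfold u. field. lra.
  - exfalso. subst c. pose proof (exp_pos th) as He.
    set (m := Rmin d (exp th * cap / (1 + exp th))).
    assert (Hm0 : 0 < m).
    { apply Rmin_glb_lt; auto. apply Rdiv_lt_0_compat; nra. }
    assert (Hmd : m <= d) by apply Rmin_l.
    assert (Hm : m <= exp th * cap / (1 + exp th)) by apply Rmin_r.
    assert (Hsmall : m / 2 * (1 + exp th) < exp th * cap).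
    { apply (Rmult_le_compat_r (1 + exp th)) in Hm; [|lra].
      replace (exp th * cap / (1 + exp th) * (1 + exp th)) with (exp th * cap) in Hm
        by (field; lra). nra. }
    assert (Hpos := br_payoff_pos th cap (m / 2) ltac:(lra) Hsmall).
    assert (Hle := Hmax (m / 2) ltac:(lra)).
    assert (Hzero : br_payoff th cap 0 = 0) by (unfold br_payoff; ring). lra.
Qed.

(** * Unilateral deviations and feasibility *)

Definition residual (S : list nat) (q : nat -> R) (i : nat) : R := 1 - (sumS S q - q i).

Definition cap_bound (theta : nat -> R) (Sb : list nat) : R :=
  sumS Sb (fun i => exp (theta i)) / (1 + sumS Sb (fun i => exp (theta i))).

Lemma update_same q i x : update q i x i = x.
Proof. unfold update. destruct (Nat.eq_dec i i); congruence. Qed.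

Lemma sumS_update_notin L q i x : ~ In i L -> sumS L (update q i x) = sumS L q.
Proof.
  intros H. apply sumS_ext. intros j Hj. unfold update.
  destruct (Nat.eq_dec j i); [subst; contradiction|auto].
Qed.

Lemma sumS_update_in L q i x : NoDup L -> In i L ->
  sumS L (update q i x) = sumS L q - q i + x.
Proof.
  intros Hnd Hin. rewrite (sumS_remove L i (update q i x)), (sumS_remove L i q) by auto.
  rewrite update_same, sumS_update_notin by (apply remove_In). ring.
Qed.

Lemma sumS_exp_nonneg theta Sb : 0 <= sumS Sb (fun i => exp (theta i)).
Proof. apply sumS_nonneg. intros; left; apply exp_pos. Qed.

Lemma cap_bound_lt1 theta Sb : cap_bound theta Sb < 1.
Proof.
  unfold cap_bound. pose proof (sumS_exp_nonneg theta Sb).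
  apply (Rmult_lt_reg_r (1 + sumS Sb (fun i => exp (theta i)))); [lra|].
  unfold Rdiv. rewrite Rmult_assoc, Rinv_l by lra. lra.
Qed.

Lemma feasible_nonneg theta S q j : feasible theta S q -> In j S -> 0 <= q j.
Proof.
  intros Hf Hj. destruct (Hf [j]) as [H _].
  - intros x [<-|[]]; auto.
  - constructor; [intros []|constructor].
  - simpl in H. lra.
Qed.

Lemma feasible_lt1 theta S q : feasible theta S q -> NoDup S -> sumS S q < 1.
Proof.
  intros Hf Hnd. destruct (Hf S (incl_refl _) Hnd) as [_ H].
  pose proof (cap_bound_lt1 theta S). unfold cap_bound in *. lra.
Qed.

Lemma payoff_update theta S q i x : NoDup S -> In i S ->
  payoff theta S (update q i x) i = br_payoff (theta i) (residual S q i) x.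
Proof.
  intros. unfold payoff, price, br_payoff, residual.
  rewrite sumS_update_in, update_same by auto. do 4 f_equal. ring.
Qed.

Lemma payoff_self theta S q i :
  payoff theta S q i = br_payoff (theta i) (residual S q i) (q i).
Proof. unfold payoff, price, br_payoff, residual. do 4 f_equal. ring. Qed.

Lemma feasible_update theta S q i x : feasible theta S q -> 0 <= x ->
  (forall Sb, incl Sb S -> NoDup Sb -> In i Sb -> sumS Sb q - q i + x <= cap_bound theta Sb) ->
  feasible theta S (update q i x).
Proof.
  intros Hf Hx H Sb Hinc Hnd. split.
  - apply sumS_nonneg. intros j Hj. unfold update. destruct (Nat.eq_dec j i); auto.
    apply (feasible_nonneg theta S); auto.
  - destruct (in_dec Nat.eq_dec i Sb) as [Hi|Hi].
    + rewrite sumS_update_in by auto. apply H; auto.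
    + rewrite sumS_update_notin by auto. apply Hf; auto.
Qed.

Lemma feasible_lower theta S q i x : feasible theta S q -> 0 <= x <= q i ->
  feasible theta S (update q i x).
Proof.
  intros Hf Hx. apply feasible_update; [auto|lra|].
  intros Sb Hinc Hnd _. destruct (Hf Sb Hinc Hnd) as [_ Hb]. unfold cap_bound. lra.
Qed.

(** * The equilibrium profile *)

Section Equilibrium.

Variables (theta : nat -> R) (S : list nat).
Hypothesis HSnd : NoDup S.

Definition wt (i : nat) : R := lw (theta i).

Definition qeq (i : nat) : R := wt i / (1 + sumS S wt).

Lemma wt_pos i : 0 < wt i.
Proof. apply lw_pos. Qed.

Lemma wt_lt_exp i : wt i < exp (theta i).
Proof. apply lw_lt_exp. Qed.

Lemma sumS_wt_nonneg L : 0 <= sumS L wt.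
Proof. apply sumS_nonneg. intros j _. left. apply wt_pos. Qed.

Lemma sumS_qeq L : sumS L qeq = sumS L wt / (1 + sumS S wt).
Proof.
  pose proof (sumS_wt_nonneg S).
  unfold qeq. rewrite (sumS_ext L _ (fun j => / (1 + sumS S wt) * wt j))
    by (intros; unfold Rdiv; ring).
  rewrite sumS_scal. unfold Rdiv. ring.
Qed.

Lemma residual_qeq i : residual S qeq i = (1 + wt i) / (1 + sumS S wt).
Proof.
  pose proof (sumS_wt_nonneg S). unfold residual. rewrite sumS_qeq. unfold qeq. field. lra.
Qed.

Lemma price_qeq i : price theta S qeq i = 1 + wt i.
Proof.
  pose proof (sumS_wt_nonneg S). pose proof (wt_pos i).
  unfold price. rewrite sumS_qeq.
  replace (1 - sumS S wt / (1 + sumS S wt)) with (/ (1 + sumS S wt)) by (field; lra).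
  unfold qeq. rewrite ln_Rinv, ln_div by lra. pose proof (lw_log (theta i)). unfold wt. lra.
Qed.

(* Subset sums of qhat are at most w(Sb)/(1 + w(Sb)) <= e(Sb)/(1 + e(Sb)). *)
Lemma qeq_feasible : feasible theta S qeq.
Proof.
  intros Sb Hinc Hnd. rewrite sumS_qeq.
  pose proof (sumS_wt_nonneg Sb). pose proof (sumS_wt_nonneg S).
  assert (sumS Sb wt <= sumS S wt)
    by (apply sumS_sub; auto; intros j _; left; apply wt_pos).
  split; [apply Rdiv_le_0_compat; lra|].
  apply Rle_trans with (sumS Sb wt / (1 + sumS Sb wt)).
  - apply div_mono; lra.
  - apply frac_mono; auto. apply sumS_le. intros j _. left. apply wt_lt_exp.
Qed.

(* Each seller already plays its best response against qhat. *)
Lemma qeq_NE : is_NE theta S qeq.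
Proof.
  split; [exact qeq_feasible|].
  intros i Hi x Hfx.
  pose proof (sumS_wt_nonneg S). pose proof (wt_pos i).
  assert (Hcap : 0 < residual S qeq i)
    by (rewrite residual_qeq; apply Rdiv_lt_0_compat; lra).
  assert (Hx0 : 0 <= x)
    by (rewrite <- (update_same qeq i x); eapply feasible_nonneg; eauto).
  assert (HxR : x < residual S qeq i).
  { pose proof (feasible_lt1 _ _ _ Hfx HSnd).
    rewrite sumS_update_in in H1 by auto. unfold residual. lra. }
  rewrite payoff_update by auto.
  eapply Rle_trans; [apply (br_payoff_bound _ _ x Hcap (conj Hx0 HxR))|].
  unfold payoff. rewrite price_qeq, residual_qeq. change (lw (theta i)) with (wt i).
  unfold qeq. right. field. lra.
Qed.

Section Uniqueness.

Variable q : nat -> R.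
Hypothesis Hq : is_NE theta S q.

Let Q := sumS S q.

Lemma NE_nonneg j : In j S -> 0 <= q j.
Proof. intros. eapply feasible_nonneg; [apply Hq|auto]. Qed.

Lemma NE_total_lt1 : Q < 1.
Proof. apply (feasible_lt1 theta); [apply Hq|auto]. Qed.

(* Step (1): no seller sells more than its best response; otherwise lowering
   its quantity to the best response is feasible and strictly profitable. *)
Lemma NE_below_best_response j : In j S -> q j <= (1 - Q) * wt j.
Proof.
  intros Hj. destruct (Rle_or_lt (q j) ((1 - Q) * wt j)) as [H|H]; auto. exfalso.
  pose proof (NE_nonneg j Hj). pose proof NE_total_lt1. pose proof (wt_pos j).
  set (c := residual S q j).
  assert (Hc : 0 < c) by (unfold c, residual; fold Q; lra).
  set (xs := c * wt j / (1 + wt j)).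
  assert (Hxs0 : 0 < xs) by (unfold xs; apply Rdiv_lt_0_compat; nra).
  assert (Hxs : xs < q j).
  { unfold xs. apply (Rmult_lt_reg_r (1 + wt j)); [lra|].
    replace (c * wt j / (1 + wt j) * (1 + wt j)) with (c * wt j) by (field; lra).
    unfold c, residual. fold Q. nra. }
  pose proof (proj2 Hq j Hj xs (feasible_lower theta S q j xs (proj1 Hq) ltac:(lra))) as Hle.
  rewrite payoff_update, payoff_self in Hle by auto. fold c in Hle.
  assert (Hopt : br_payoff (theta j) c xs = c * wt j) by (apply br_payoff_opt; lra).
  rewrite Hopt in Hle.
  destruct (br_payoff_bound (theta j) c (q j) Hc) as [_ Huniq];
    [unfold c, residual; fold Q; lra|].
  specialize (Huniq Hle). change (lw (theta j)) with (wt j) in Huniq. fold xs in Huniq. lra.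
Qed.

(* Step (2a): by step (1), every subset sum of q is at most w(Sb)/(1 + w(Sb)),
   so each subset constraint containing i has slack at least the amount below;
   seller i may therefore raise its quantity by it. *)
Definition slack (i : nat) : R :=
  (exp (theta i) - wt i) /
  ((1 + sumS S (fun j => exp (theta j))) * (1 + sumS S wt)).

Lemma slack_pos i : 0 < slack i.
Proof.
  pose proof (wt_lt_exp i). pose proof (sumS_exp_nonneg theta S).
  pose proof (sumS_wt_nonneg S).
  unfold slack. apply Rdiv_lt_0_compat; nra.
Qed.

Lemma NE_raise_feasible i x : In i S -> 0 <= x <= q i + slack i ->
  feasible theta S (update q i x).
Proof.
  intros Hi Hx. apply feasible_update; [apply Hq|lra|]. intros Sb Hinc Hnd Hin.
  set (s := sumS Sb q). set (Wb := sumS Sb wt).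
  set (Eb := sumS Sb (fun i => exp (theta i))).
  pose proof (sumS_wt_nonneg Sb) as HWb0. fold Wb in HWb0.
  pose proof (sumS_exp_nonneg theta Sb) as HEb0. fold Eb in HEb0.
  pose proof NE_total_lt1.
  assert (HWb : Wb <= sumS S wt) by (apply sumS_sub; auto; intros j _; left; apply wt_pos).
  assert (HEb : Eb <= sumS S (fun j => exp (theta j)))
    by (apply sumS_sub; auto; intros j _; left; apply exp_pos).
  assert (Hs1 : s <= (1 - Q) * Wb).
  { unfold s, Wb. rewrite <- sumS_scal. apply sumS_le. intros j Hj.
    apply NE_below_best_response; auto. }
  assert (Hs2 : s <= Q) by (apply sumS_sub; auto; intros; apply NE_nonneg; auto).
  assert (Hs3 : s <= Wb / (1 + Wb)).
  { apply (Rmult_le_reg_r (1 + Wb)); [lra|].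
    replace (Wb / (1 + Wb) * (1 + Wb)) with Wb by (field; lra). nra. }
  assert (Hgap : exp (theta i) - wt i <= Eb - Wb).
  { unfold Eb, Wb. rewrite <- sumS_minus, (sumS_remove Sb i) by auto.
    enough (0 <= sumS (remove Nat.eq_dec i Sb) (fun j => exp (theta j) - wt j)) by lra.
    apply sumS_nonneg. intros j _. pose proof (wt_lt_exp j). lra. }
  assert (Hcap : cap_bound theta Sb - Wb / (1 + Wb) = (Eb - Wb) / ((1 + Eb) * (1 + Wb)))
    by (unfold cap_bound; fold Eb; field; lra).
  assert (slack i <= (Eb - Wb) / ((1 + Eb) * (1 + Wb))).
  { unfold slack. pose proof (wt_lt_exp i).
    pose proof (sumS_wt_nonneg S). apply div_mono; nra. }
  fold s. lra.
Qed.

Lemma NE_first_order i : In i S -> q i = (1 - Q) * wt i.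
Proof.
  intros Hi. pose proof (NE_nonneg i Hi). pose proof NE_total_lt1.
  replace (1 - Q) with (residual S q i - q i) by (unfold residual, Q; ring).
  apply (br_local_max _ _ _ (slack i)).
  - unfold residual. fold Q. lra.
  - unfold residual. fold Q. lra.
  - apply slack_pos.
  - intros x Hx. rewrite <- payoff_self, <- payoff_update by auto.
    apply (proj2 Hq); auto. apply NE_raise_feasible; auto.
Qed.

(* Step (3): summing the first-order conditions determines Q. *)
Lemma NE_eq_qeq i : In i S -> q i = qeq i.
Proof.
  intros Hi. pose proof (sumS_wt_nonneg S).
  assert (HQ : Q = (1 - Q) * sumS S wt).
  { unfold Q. rewrite <- sumS_scal. apply sumS_ext. intros; apply NE_first_order; auto. }
  assert (Hinv : 1 - Q = / (1 + sumS S wt)) by (field_simplify_eq; [nra|lra]).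
  rewrite NE_first_order, Hinv by auto. unfold qeq. field. lra.
Qed.

End Uniqueness.

Lemma revenue_qeq :
  revenue theta S qeq = sumS S (fun i => wt i ^ 2 + wt i) / (1 + sumS S wt).
Proof.
  pose proof (sumS_wt_nonneg S). unfold revenue.
  rewrite (sumS_ext S _ (fun i => / (1 + sumS S wt) * (wt i ^ 2 + wt i))).
  - rewrite sumS_scal. unfold Rdiv. ring.
  - intros j Hj. rewrite price_qeq. unfold qeq. field. lra.
Qed.

(* Consumer surplus: e^(theta_i - price_i) = e^(theta_i - 1 - w_i) = w_i. *)
Lemma welfare_qeq :
  welfare theta S qeq = ln (1 + sumS S wt) + revenue theta S qeq.
Proof.
  unfold welfare. do 3 f_equal. apply sumS_ext. intros j _.
  rewrite price_qeq. rewrite <- (lw_exp (theta j)) at 2. f_equal. unfold wt. ring.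
Qed.

End Equilibrium.

Theorem theorem5 (n : nat) (theta : nat -> R) (S : list nat)
  (Htheta : forall i, (1 <= i <= n)%nat -> 0 <= theta i)
  (HSsub : forall i, In i S -> (1 <= i <= n)%nat)
  (HSnd : NoDup S) (HSne : S <> []) :
  let w := fun i => LambertW (exp (theta i - 1)) in
  let qhat := fun i => w i / (1 + sumS S w) in
  is_NE theta S qhat /\
  (forall q, is_NE theta S q -> forall i, In i S -> q i = qhat i) /\
  (forall i, In i S -> price theta S qhat i = 1 + w i) /\
  welfare theta S qhat =
    ln (1 + sumS S w) + sumS S (fun i => w i ^ 2 + w i) / (1 + sumS S w) /\
  revenue theta S qhat = sumS S (fun i => w i ^ 2 + w i) / (1 + sumS S w).
Proof.
  intros w qhat.
  change qhat with (qeq theta S). change w with (wt theta).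
  split; [apply qeq_NE; auto|].
  split; [intros q Hq i Hi; apply (NE_eq_qeq theta S HSnd q Hq i Hi)|].
  split; [intros i _; apply price_qeq|].
  rewrite welfare_qeq, revenue_qeq. split; reflexivity.
Qed.
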